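(* For every integer $d\ge7$ and every $k\ge3$, \[ \frac{1}{d}+\frac{1}{d^3}-\frac{1}{d^4}+\sum_{j=3}^{d} d^{-j}\, j! + (2\pi d)^{1/2}\Big(\frac{e^{-1/13}}{\sqrt{2\pi}}\Big)^{d}\,\zeta\Big(\frac{d-1}{2}\Big)-\frac{k}{2d}<0. \]
   Context: $\zeta$ denotes the Riemann zeta function. *)

From Stdlib Require Import Reals.
From Coquelicot Require Import Coquelicot.
Open Scope R_scope.

Definition zeta (s : R) : R :=
  Series (fun n : nat => / Rpower (INR (n + 1)) s).

(* Put x = d >= 7.  Since j!/x^j decreases in j for j <= x, the sum is at most
   3!/x^3 + 4!/x^4 + 5!/x^5 + 6!/x^6 + (x - 6) 7!/x^7.  Since (d-1)/2 >= 2, zeta is at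
   most zeta 2 <= sum 2/((n+1)(n+2)) = 2.  With e^(-1/13) <= 13/14 and 2 pi >= 6, the
   quantity d^3 (e^(-2/13)/(2 pi))^d decreases for d >= 7, so the zeta term is at most
   2/(19 d).  What remains is a polynomial inequality in y = 1/d in (0, 1/7]. *)

From Stdlib Require Import Reals Lra Lia Factorial.
From Coquelicot Require Import Coquelicot.
Open Scope R_scope.

Lemma is_series_telescoping (u : nat -> R) (l : R) :
  is_lim_seq u l -> is_series (fun n => u n - u (S n)) (u O - l).
Proof.
  intros Hu.
  assert (Hsum : forall N, sum_n (fun n => u n - u (S n)) N = u O - u (S N)).
  { induction N as [|N IH].
    - now rewrite sum_O.
    - rewrite sum_Sn, IH. unfold plus; simpl. ring. }
  change (is_lim_seq (sum_n (fun n => u n - u (S n))) (u O - l)).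
  apply (is_lim_seq_ext (fun N => u O - u (S N))).
  { intros N. now rewrite Hsum. }
  apply (is_lim_seq_minus' _ _ (u O) l).
  - apply is_lim_seq_const.
  - now apply (is_lim_seq_incr_1 u l).
Qed.

Lemma zeta_le_2 (s : R) : 2 <= s -> zeta s <= 2.
Proof.
  intros Hs.
  set (u := fun n : nat => 2 / (INR n + 1)).
  assert (Hu : is_lim_seq u 0).
  { unfold u. replace (Finite 0) with (Rbar_mult 2 (Rbar_inv p_infty)) by
      (simpl; f_equal; ring).
    apply (is_lim_seq_scal_l (fun n => / (INR n + 1)) 2 (Rbar_inv p_infty)).
    apply is_lim_seq_inv; [| discriminate].
    eapply is_lim_seq_plus;
      [apply is_lim_seq_INR | apply is_lim_seq_const | reflexivity]. }
  pose proof (is_series_telescoping u 0 Hu) as Htel.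
  replace (u O - 0) with 2 in Htel by (unfold u; simpl; field).
  unfold zeta. rewrite <- (is_series_unique _ _ Htel).
  apply Series_le; [| now exists 2].
  intros n. unfold u. rewrite S_INR, plus_INR. simpl INR.
  pose proof (pos_INR n) as Hn.
  assert (Hsq : (INR n + 1) ^ 2 <= Rpower (INR n + 1) s).
  { rewrite <- Rpower_pow by lra. apply Rle_Rpower; simpl; lra. }
  assert (Hpos : 0 < (INR n + 1) ^ 2) by (apply pow_lt; lra).
  split.
  - left. apply Rinv_0_lt_compat. lra.
  - apply Rle_trans with (/ (INR n + 1) ^ 2); [apply Rinv_le_contravar; lra |].
    replace (2 / (INR n + 1) - 2 / (INR n + 1 + 1))
      with (2 / ((INR n + 1) * (INR n + 2))) by (field; lra).
    apply Rmult_le_reg_r with ((INR n + 1) ^ 2 * (INR n + 2)); [nra |].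
    field_simplify; nra.
Qed.

Lemma fact_div_pow_le (x : R) (m j : nat) :
  0 < x -> (m <= j)%nat -> INR j <= x ->
  INR (fact j) / x ^ j <= INR (fact m) / x ^ m.
Proof.
  intros Hx Hmj. induction Hmj as [|j Hmj IH]; intros Hjx; [lra |].
  assert (Hxj : 0 < x ^ j) by (apply pow_lt; lra).
  assert (Hterm : 0 <= INR (fact j) / x ^ j)
    by (apply Rdiv_le_0_compat; [apply pos_INR | exact Hxj]).
  assert (Hratio : INR (S j) / x <= 1)
    by (apply Rmult_le_reg_r with x; [lra | field_simplify; lra]).
  replace (INR (fact (S j)) / x ^ S j)
    with (INR (S j) / x * (INR (fact j) / x ^ j))
    by (rewrite fact_simpl, mult_INR; simpl; field; lra).
  rewrite S_INR in Hjx.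
  specialize (IH ltac:(lra)). nra.
Qed.

Lemma sum_f_le_tail_const (f : nat -> R) (a m n : nat) :
  (a <= m <= n)%nat -> (forall j, (m < j <= n)%nat -> f j <= f m) ->
  sum_f a n f <= sum_f a m f + INR (n - m) * f m.
Proof.
  intros [Ham Hmn]. induction Hmn as [|n Hmn IH]; intros Hf.
  - rewrite Nat.sub_diag. simpl. lra.
  - rewrite sum_f_n_Sm by lia.
    replace (S n - m)%nat with (S (n - m)) by lia. rewrite S_INR.
    specialize (IH (fun j Hj => Hf j ltac:(lia))).
    specialize (Hf (S n) ltac:(lia)). lra.
Qed.

Lemma sum_fact_div_pow_le (d : nat) : (7 <= d)%nat ->
  sum_f 3 d (fun j => INR (fact j) / INR d ^ j)
  <= 6 / INR d ^ 3 + 24 / INR d ^ 4 + 120 / INR d ^ 5 + 720 / INR d ^ 6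
     + (INR d - 6) * (5040 / INR d ^ 7).
Proof.
  intros Hd. set (x := INR d).
  assert (Hx : 7 <= x) by (unfold x; apply (le_INR 7) in Hd; simpl in Hd; lra).
  eapply Rle_trans.
  - apply (sum_f_le_tail_const _ 3 7 d); [lia |].
    intros j Hj. apply fact_div_pow_le; [lra | lia | apply le_INR; lia].
  - rewrite minus_INR by lia. fold x.
    set (f := fun j => INR (fact j) / x ^ j).
    unfold sum_f; simpl sum_f_R0; simpl Nat.add. unfold f.
    replace (INR (fact 3)) with 6 by (rewrite INR_IZR_INZ; reflexivity).
    replace (INR (fact 4)) with 24 by (rewrite INR_IZR_INZ; reflexivity).
    replace (INR (fact 5)) with 120 by (rewrite INR_IZR_INZ; reflexivity).
    replace (INR (fact 6)) with 720 by (rewrite INR_IZR_INZ; reflexivity).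
    replace (INR (fact 7)) with 5040 by (rewrite INR_IZR_INZ; reflexivity).
    replace (INR 7) with 7 by (simpl; ring). lra.
Qed.

Lemma exp_neg_le_inv (t : R) : 0 <= t -> exp (- t) <= / (1 + t).
Proof.
  intros Ht. rewrite exp_Ropp.
  apply Rinv_le_contravar; [lra | apply exp_ineq1_le].
Qed.

Lemma pow3_mul_pow_le (r : R) (m n : nat) :
  0 <= r <= 1 / 2 -> (4 <= m <= n)%nat ->
  INR n ^ 3 * r ^ n <= INR m ^ 3 * r ^ m.
Proof.
  intros Hr [Hm Hmn]. induction Hmn as [|n Hmn IH]; [lra |].
  apply Rle_trans with (INR n ^ 3 * r ^ n); [| exact IH].
  assert (Hn : INR 4 <= INR n) by (apply le_INR; lia).
  simpl in Hn. rewrite S_INR.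
  assert (Hcube : (INR n + 1) ^ 3 <= 2 * INR n ^ 3).
  { assert (0 <= INR n - 4) by lra. nra. }
  assert (Hstep : (INR n + 1) ^ 3 * r <= INR n ^ 3)
    by (assert (0 <= (INR n + 1) ^ 3) by (apply pow_le; lra); nra).
  simpl pow at 2. rewrite <- Rmult_assoc.
  apply Rmult_le_compat_r; [apply pow_le; lra | exact Hstep].
Qed.

Lemma sqr_sqrt_mul_pow_div_sqrt (p x c : R) (d : nat) : 0 < p -> 0 <= x ->
  (sqrt (p * x) * (c / sqrt p) ^ d * x) ^ 2 = p * (x ^ 3 * (c ^ 2 / p) ^ d).
Proof.
  intros Hp Hx.
  rewrite !Rpow_mult_distr, pow2_sqrt by nra.
  rewrite <- pow_mult, Nat.mul_comm, pow_mult.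
  unfold Rdiv. rewrite Rpow_mult_distr, pow_inv, pow2_sqrt by lra. ring.
Qed.

Lemma sqrt_2PI_mul_pow_bounds (c : R) (d : nat) :
  0 <= c <= 13 / 14 -> (7 <= d)%nat ->
  0 <= sqrt (2 * PI * INR d) * (c / sqrt (2 * PI)) ^ d <= / (19 * INR d).
Proof.
  intros Hc Hd.
  set (p := 2 * PI). set (x := INR d).
  assert (Hp : 6 <= p) by (unfold p; pose proof PI2_3_2; lra).
  assert (Hx : 7 <= x) by (unfold x; apply (le_INR 7) in Hd; simpl in Hd; lra).
  set (A := sqrt (p * x) * (c / sqrt p) ^ d * x).
  assert (HA : 0 <= A).
  { unfold A. repeat apply Rmult_le_pos; try lra; [apply sqrt_pos |].
    apply pow_le, Rdiv_le_0_compat; [lra | apply sqrt_lt_R0; lra]. }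
  set (r := c ^ 2 / p).
  assert (Hr : 0 <= r <= 1 / 2).
  { unfold r. split; [apply Rdiv_le_0_compat; nra |].
    apply Rmult_le_reg_r with p; [lra |]. field_simplify; nra. }
  (* [A^2 = p x^3 r^d], and [x^3 r^d] is largest at [d = 7] *)
  assert (HA2 : A ^ 2 <= 343 * c ^ 14 / p ^ 6).
  { unfold A. rewrite sqr_sqrt_mul_pow_div_sqrt by lra. fold r.
    pose proof (pow3_mul_pow_le r 7 d Hr ltac:(lia)) as Hmono. fold x in Hmono.
    replace (343 * c ^ 14 / p ^ 6) with (p * (INR 7 ^ 3 * r ^ 7))
      by (unfold r; simpl INR; field; lra).
    apply Rmult_le_compat_l; lra. }
  assert (Hnum : 343 * c ^ 14 / p ^ 6 <= 343 * (13 / 14) ^ 14 / 6 ^ 6).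
  { assert (Hp6 : 6 ^ 6 <= p ^ 6) by (apply pow_incr; lra).
    assert (Hc14 : c ^ 14 <= (13 / 14) ^ 14) by (apply pow_incr; lra).
    unfold Rdiv. apply Rmult_le_compat.
    - apply Rmult_le_pos; [lra | apply pow_le; lra].
    - left. apply Rinv_0_lt_compat, pow_lt. lra.
    - lra.
    - apply Rinv_le_contravar; [apply pow_lt |]; lra. }
  assert (HAle : A <= 1 / 19).
  { assert (343 * (13 / 14) ^ 14 / 6 ^ 6 <= (1 / 19) ^ 2) by (simpl; lra). nra. }
  unfold A in HA, HAle.
  split; apply Rmult_le_reg_r with x; try lra.
  replace (/ (19 * x) * x) with (1 / 19) by (field; lra). exact HAle.
Qed.

Lemma lemma2p4_majorant_neg (x : R) : 7 <= x ->
  / x + / x ^ 3 - / x ^ 4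
  + (6 / x ^ 3 + 24 / x ^ 4 + 120 / x ^ 5 + 720 / x ^ 6 + (x - 6) * (5040 / x ^ 7))
  + 2 / (19 * x) - 3 / (2 * x) < 0.
Proof.
  intros Hx.
  assert (Hy : 0 < / x <= 1 / 7).
  { split; [apply Rinv_0_lt_compat; lra |].
    apply Rmult_le_reg_r with x; [lra |]. field_simplify; lra. }
  replace (/ x + / x ^ 3 - / x ^ 4
    + (6 / x ^ 3 + 24 / x ^ 4 + 120 / x ^ 5 + 720 / x ^ 6 + (x - 6) * (5040 / x ^ 7))
    + 2 / (19 * x) - 3 / (2 * x))
    with (/ x * (7 * (/ x) ^ 2 + 23 * (/ x) ^ 3 + 120 * (/ x) ^ 4
                 + (/ x) ^ 4 * (/ x * (5760 - 30240 * / x)) - 15 / 38))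
    by (field; lra).
  set (y := / x) in *.
  assert (Hquad : y * (5760 - 30240 * y) <= 275)
    by (pose proof (pow2_ge_0 (y - 2 / 21)); nra).
  assert (Hy2 : y ^ 2 <= 1 / 49) by nra.
  assert (Hy3 : y ^ 3 <= 1 / 343) by (simpl; nra).
  assert (Hy4 : y ^ 4 <= 1 / 2401) by (simpl; nra).
  assert (Htail : y ^ 4 * (y * (5760 - 30240 * y)) <= 275 / 2401)
    by (assert (0 <= y ^ 4) by (apply pow_le; lra); nra).
  rewrite <- (Rmult_0_r y). apply Rmult_lt_compat_l; lra.
Qed.

Theorem lemma2p4 (d k : nat) (hd : (7 <= d)%nat) (hk : (3 <= k)%nat) :
  / INR d + / INR d ^ 3 - / INR d ^ 4
  + sum_f 3 d (fun j => INR (Factorial.fact j) / INR d ^ j)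
  + sqrt (2 * PI * INR d) * (exp (- (1 / 13)) / sqrt (2 * PI)) ^ d
    * zeta ((INR d - 1) / 2)
  - INR k / (2 * INR d) < 0.
Proof.
  pose proof (sum_fact_div_pow_le d hd) as Hsum.
  assert (Hc : 0 <= exp (- (1 / 13)) <= 13 / 14).
  { split; [left; apply exp_pos |].
    apply Rle_trans with (/ (1 + 1 / 13)); [apply exp_neg_le_inv | ]; lra. }
  pose proof (sqrt_2PI_mul_pow_bounds _ d Hc hd) as Hcoef.
  set (x := INR d) in *.
  set (T := sqrt (2 * PI * x) * (exp (- (1 / 13)) / sqrt (2 * PI)) ^ d) in *.
  assert (Hx : 7 <= x) by (unfold x; apply (le_INR 7) in hd; simpl in hd; lra).
  assert (Hk : 3 <= INR k) by (apply (le_INR 3) in hk; simpl in hk; lra).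
  assert (Hzeta : zeta ((x - 1) / 2) <= 2) by (apply zeta_le_2; lra).
  assert (Hterm : T * zeta ((x - 1) / 2) <= 2 / (19 * x)).
  { apply Rle_trans with (T * 2); [apply Rmult_le_compat_l; lra |].
    replace (2 / (19 * x)) with (/ (19 * x) * 2) by (field; lra). lra. }
  assert (Hk2 : 3 / (2 * x) <= INR k / (2 * x))
    by (apply Rmult_le_compat_r; [left; apply Rinv_0_lt_compat |]; lra).
  pose proof (lemma2p4_majorant_neg x Hx). lra.
Qed.
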